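(* Let $X$ be a prelength space and $Y$ a metric space. Then $\mathrm{map}:(X\to Y)\to(\mathfrak{C}(X)\to\mathfrak{C}(Y))$ is uniformly continuous with modulus $\lambda\varepsilon.\varepsilon$; that is, for all $\varepsilon$ and uniformly continuous $f,g:X\to Y$, if $B_\varepsilon(f(a),g(a))$ for all $a\in X$, then $B'_\varepsilon(\mathrm{map}(f)(x),\mathrm{map}(g)(x))$ for all $x\in\mathfrak{C}(X)$.
   Context: $\mathbb{Q}^+$ denotes the strictly positive rationals; all $\varepsilon,\delta$ (with indices) range over $\mathbb{Q}^+$. A metric space is a triple $(X,\asymp,B)$ where $\asymp$ is an equivalence relation on $X$ and $B$ assigns to each $\varepsilon\in\mathbb{Q}^+$ a binary relation $B_\varepsilon$ on $X$ respecting $\asymp$, such that: (1) each $B_\varepsilon$ is reflexive; (2) each $B_\varepsilon$ is symmetric; (3) if $B_{\varepsilon_1}(a,b)$ and $B_{\varepsilon_2}(b,c)$ then $B_{\varepsilon_1+\varepsilon_2}(a,c)$; (4) if $B_{\varepsilon+\delta}(a,b)$ for all $\delta$, then $B_\varepsilon(a,b)$; (5) if $B_\varepsilon(a,b)$ for all $\varepsilon$, then $a\asymp b$. A prelength space is a metric space such that for all $a,b,\varepsilon,\delta_1,\delta_2$ with $\varepsilon<\delta_1+\delta_2$ and $B_\varepsilon(a,b)$ there exists $c$ with $B_{\delta_1}(a,c)$ and $B_{\delta_2}(c,b)$. A regular function over $X$ is a function $x:\mathbb{Q}^+\to X$ such that $B_{\varepsilon_1+\varepsilon_2}(x(\varepsilon_1),x(\varepsilon_2))$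 for all $\varepsilon_1,\varepsilon_2$. $\mathfrak{C}(X)$ is the metric space of regular functions over $X$, with $x\asymp y$ iff $B_{2\varepsilon}(x(\varepsilon),y(\varepsilon))$ for all $\varepsilon$ and $B'_\varepsilon(x,y)$ iff $B_{\varepsilon+\delta_1+\delta_2}(x(\delta_1),y(\delta_2))$ for all $\delta_1,\delta_2$. A uniformly continuous function $f:X\to Y$ is a pair of a function and a modulus $\mu_f$ with $B^X_{\mu_f(\varepsilon)}(x_1,x_2)\Rightarrow B^Y_\varepsilon(f(x_1),f(x_2))$. For metric spaces $U,V$, $U\to V$ denotes the metric space of uniformly continuous functions with $B_\varepsilon(f,g)$ iff $B_\varepsilon(f(a),g(a))$ for all $a\in U$. $\mathrm{map}(f)(x)=\lambda\varepsilon.\,f(x(\mu_f(\varepsilon)))$. *)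

(* Q^+ is represented as rationals q : rat with 0 < q;
   every quantification over epsilons/deltas carries a positivity hypothesis. *)
From mathcomp Require Import all_boot all_order all_algebra.
Set Implicit Arguments. Unset Strict Implicit. Unset Printing Implicit Defensive.
Import Order.TTheory GRing.Theory Num.Theory.
Local Open Scope ring_scope.

(* A metric space (X, ≍, B) with balls B_e indexed by positive rationals.
   (ball e is irrelevant/unconstrained for e <= 0.) *)
Record MetricSpace := {
  carrier :> Type;
  meq : carrier -> carrier -> Prop;
  ball : rat -> carrier -> carrier -> Prop;
  meq_refl : forall a, meq a a;
  meq_sym : forall a b, meq a b -> meq b a;
  meq_trans : forall a b c, meq a b -> meq b c -> meq a c;
  ball_meq : forall e a a' b b', meq a a' -> meq b b' -> ball e a b -> ball e a' b';
  ball_refl : forall e a, 0 < e -> ball e a a;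
  ball_sym : forall e a b, 0 < e -> ball e a b -> ball e b a;
  ball_triangle : forall e1 e2 a b c, 0 < e1 -> 0 < e2 ->
      ball e1 a b -> ball e2 b c -> ball (e1 + e2) a c;
  ball_closed : forall e a b, 0 < e ->
      (forall d, 0 < d -> ball (e + d) a b) -> ball e a b;
  ball_eq : forall a b, (forall e, 0 < e -> ball e a b) -> meq a b
}.

Arguments meq {m}.
Arguments ball {m}.

Definition prelength (X : MetricSpace) : Prop :=
  forall (a b : X) (e d1 d2 : rat), 0 < e -> 0 < d1 -> 0 < d2 ->
    e < d1 + d2 -> ball e a b ->
    exists c : X, ball d1 a c /\ ball d2 c b.

Record UCFun (X Y : MetricSpace) := {
  ucf :> X -> Y;
  ucmod : rat -> rat;
  ucmod_pos : forall e, 0 < e -> 0 < ucmod e;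
  uc_prop : forall e (x1 x2 : X), 0 < e ->
      ball (ucmod e) x1 x2 -> ball e (ucf x1) (ucf x2)
}.

Definition is_regular (X : MetricSpace) (x : rat -> X) : Prop :=
  forall e1 e2, 0 < e1 -> 0 < e2 -> ball (e1 + e2) (x e1) (x e2).

Definition Cball (X : MetricSpace) (e : rat) (x y : rat -> X) : Prop :=
  forall d1 d2, 0 < d1 -> 0 < d2 -> ball (e + d1 + d2) (x d1) (y d2).

Definition cmap (X Y : MetricSpace) (f : UCFun X Y) (x : rat -> X) : rat -> Y :=
  fun e => f (x (ucmod f e)).

From mathcomp Require Import all_boot all_order all_algebra.
From mathcomp Require Import ring lra.
Set Implicit Arguments. Unset Strict Implicit. Unset Printing Implicit Defensive.
Import Order.TTheory GRing.Theory Num.Theory.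
Local Open Scope ring_scope.

(* Write x1 = x(mu_f d1), x2 = x(mu_g d2); regularity gives B_{mu_f d1 + mu_g d2}(x1, x2).
   The prelength property splits this distance through points c, c' with
   B_{mu_f d1}(x1, c), B_{mu_g s}(c, c') and B_{mu_g d2}(c', x2) for an arbitrary slack s,
   so f x1 ~_{d1} f c ~_e g c ~_s g c' ~_{d2} g x2, and closedness of balls removes s.
   The slack is unavoidable since the prelength axiom only splits strictly larger balls. *)

Section PrelengthSplit.

Variable X : MetricSpace.
Hypothesis prelengthX : prelength X.

Lemma prelength_split_slack (a b : X) e1 e2 d :
  0 < e1 -> 0 < e2 -> 0 < d -> ball (e1 + e2) a b ->
  exists c : X, ball e1 a c /\ ball (e2 + d) c b.
Proof.
move=> he1 he2 hd hab.
by apply: prelengthX hab; lra.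
Qed.

Lemma prelength_split3 (a b : X) e1 e2 d :
  0 < e1 -> 0 < e2 -> 0 < d -> ball (e1 + e2) a b ->
  exists c c' : X, [/\ ball e1 a c, ball d c c' & ball e2 c' b].
Proof.
move=> he1 he2 hd hab.
have hd2 : 0 < d / 2 by rewrite divr_gt0.
have [c [hac hcb]] := prelength_split_slack he1 he2 hd2 hab.
have [c' [hcc' hc'b]] : exists c' : X, ball d c c' /\ ball e2 c' b.
  by apply: prelengthX hcb; lra.
by exists c, c'.
Qed.

End PrelengthSplit.

Lemma close_ucfun_ball (X Y : MetricSpace) (f g : UCFun X Y) e d1 d2 (u v : X) :
  prelength X -> 0 < e -> 0 < d1 -> 0 < d2 ->
  (forall a : X, ball e (f a) (g a)) ->
  ball (ucmod f d1 + ucmod g d2) u v -> ball (e + d1 + d2) (f u) (g v).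
Proof.
move=> prelengthX he hd1 hd2 Hfg huv.
apply: ball_closed => [|s hs]; first by rewrite !addr_gt0.
have [c [c' [huc hcc' hc'v]]] :=
  prelength_split3 prelengthX (ucmod_pos f hd1) (ucmod_pos g hd2) (ucmod_pos g hs) huv.
have fu_gc := ball_triangle hd1 he (uc_prop hd1 huc) (Hfg c).
have fu_gc' := ball_triangle (addr_gt0 hd1 he) hs fu_gc (uc_prop hs hcc').
have fu_gv := ball_triangle (addr_gt0 (addr_gt0 hd1 he) hs) hd2 fu_gc' (uc_prop hd2 hc'v).
by have -> : e + d1 + d2 + s = d1 + e + s + d2 by ring.
Qed.

Theorem lemma24 (X Y : MetricSpace) (HX : prelength X) (e : rat) (he : 0 < e)
  (f g : UCFun X Y) (Hfg : forall a : X, ball e (f a) (g a))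
  (x : rat -> X) (Hx : is_regular x) :
  Cball e (cmap f x) (cmap g x).
Proof.
move=> d1 d2 hd1 hd2.
apply: close_ucfun_ball => //.
exact: Hx (ucmod_pos f hd1) (ucmod_pos g hd2).
Qed.
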